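(* Let $T$ be a tree as below with an interior edge $e$, and suppose (after relabeling) that $\mathrm{de}(e)=\{1,\dots,k\}$. Let $T_e^-$ and $T_e^+$ be as below. Grade $\mathbb{K}[q]$ by $\deg q_{g_1\cdots g_n}=e_{g_1+\cdots+g_k}$, grade $\mathbb{K}[q]_-$ by $\deg q_{g_1\cdots g_k}=e_{g_1+\cdots+g_k}$, and grade $\mathbb{K}[q]_+$ by $\deg q_{h\,g_{k+1}\cdots g_n}=e_h$, where $e_h$ ($h\in G$) are the standard unit vectors of $\mathbb{Z}^G$; let $\mathcal{A}=\{e_h:h\in G\}$. Then $\mathcal{A}$ is linearly independent and $$I_{G,T}=I_{G,T_e^+}\times_{\mathcal{A}}I_{G,T_e^-},$$ where the toric fiber product variable corresponding to $q_{g_1\cdots g_n}$ is the product of $q_{h\,g_{k+1}\cdots g_n}\in\mathbb{K}[q]_+$ and $q_{g_1\cdots g_k}\in\mathbb{K}[q]_-$ with $h=g_1+\cdots+g_k$.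
   Context: $\mathbb{K}$ is a field, $G$ a finite group written additively (not necessarily abelian). $T$ is a tree with leaves labeled $1,\dots,n+1$, rooted at leaf $n+1$, with edges directed away from the root. For an edge $e$, $\mathrm{de}(e)$ is the set of leaves reachable from $e$ by a directed path; it is assumed that every $\mathrm{de}(e)$ is an interval of integers. For $g_1,\dots,g_n\in G$, $g_e=\sum_{i\in\mathrm{de}(e)}g_i$, summed in increasing order of $i$. $\mathbb{K}[q]=\mathbb{K}[q_{g_1\cdots g_n}:g_i\in G]$, $\mathbb{K}[a]=\mathbb{K}[a^{(e)}_h: e\in E(T),h\in G]$, $\phi_{G,T}:q_{g_1\cdots g_n}\mapsto\prod_{e\in E(T)}a^{(e)}_{g_e}$, and $I_{G,T}=\ker\phi_{G,T}$. Edges are partially ordered by $e'<e$ if there is a directed path from $e$ to $e'$. An interior edge is one not incident to any leaf. $T_e^-$ is the subtree consisting of edges $e'\le e$, rooted at the tail of $e$, with non-root leaves $1,\dots,k$; $T_e^+$ is the subtree of edges $e'$ with $e'\not<e$ (so $T_e^+\cap T_e^-=\{e\}$), rooted at $n+1$, whose non-root leaves are the head of $e$ (listed first, carrying group label $h$) followed by $k+1,\dots,n$. $\mathbb{K}[q]_-=\mathbb{K}[q_{g_1\cdots g_k}]$ and $\mathbb{K}[q]_+=\mathbb{K}[q_{h\,g_{k+1}\cdots g_n}]$ are the ambient rings of $I_{G,T_e^-}$ and $I_{G,T_e^+}$, defined by the same construction for these rooted trees. Toric fiber product: for polynomial rings $\mathbb{K}[x^i_j]$, $\mathbb{K}[y^i_k]$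 graded by $\deg x^i_j=\deg y^i_k=\mathbf{a}^i$ and homogeneous ideals $I,J$, $I\times_{\mathcal{A}}J$ is the kernel of $\mathbb{K}[z^i_{jk}]\to\mathbb{K}[x]/I\otimes_{\mathbb{K}}\mathbb{K}[y]/J$, $z^i_{jk}\mapsto x^i_j\otimes y^i_k$; here the degree classes are indexed by $h\in G$. *)

From HB Require Import structures.
From mathcomp Require Import all_boot all_order all_algebra all_fingroup.
From mathcomp Require Import mpoly.

Set Implicit Arguments.
Unset Strict Implicit.
Unset Printing Implicit Defensive.

Import GRing.Theory.
Local Open Scope ring_scope.

(* Rooted planar trees.  A rooted tree T with leaves 1..n+1, rooted at leaf  *)
(* n+1, is represented by the planar tree [t] hanging below the unique       *)
(* neighbour of the root (the root edge enters the root vertex of [t]).      *)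
(* Childless vertices are the leaves 1..n, numbered left to right; this is   *)
(* exactly the class of trees in which every de(e) is an interval.  Every    *)
(* vertex of [t] is the head of exactly one edge of T.                       *)
Inductive rtree := RNode of seq rtree.

Definition Leaf := RNode [::].

Definition is_leaf (t : rtree) : bool := if t is RNode [::] then true else false.

Fixpoint nleaves (t : rtree) : nat :=
  let: RNode cs := t in
  if cs is [::] then 1%N else sumn (map nleaves cs).

(* the intervals de(e) = [start, start+len) (0-based leaf indices) of all the *)
(* edges of the tree, one per vertex of [t]; [off] = leaves to the left.     *)
Fixpoint eints (t : rtree) (off : nat) : seq (nat * nat) :=
  let: RNode cs := t in
  (off, nleaves t) ::
  (fix aux (o : nat) (l : seq rtree) : seq (nat * nat) :=
     match l with
     | [::] => [::]
     | c :: l' => eints c o ++ aux (o + nleaves c)%N l'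
     end) off cs.

Definition edges (t : rtree) : seq (nat * nat) := eints t 0.

(* positions: paths of child indices from the root vertex of [t] *)
Fixpoint subtree (t : rtree) (p : seq nat) : option rtree :=
  match p with
  | [::] => Some t
  | i :: p' => let: RNode cs := t in
               if (i < size cs)%N then subtree (nth Leaf cs i) p' else None
  end.

Fixpoint graft (t : rtree) (p : seq nat) (s : rtree) : rtree :=
  match p with
  | [::] => s
  | i :: p' => let: RNode cs := t in
               RNode (set_nth Leaf cs i (graft (nth Leaf cs i) p' s))
  end.

Fixpoint offset (t : rtree) (p : seq nat) : nat :=
  match p with
  | [::] => 0%N
  | i :: p' => let: RNode cs := t in
               (sumn (map nleaves (take i cs)) + offset (nth Leaf cs i) p')%N
  end.


Fixpoint nleaves_gt0 (t : rtree) : (0 < nleaves t)%N :=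
  match t return (0 < nleaves t)%N with
  | RNode [::] => isT
  | RNode (c :: cs) => @ltn_addr 0 (nleaves c) _ (nleaves_gt0 c)
  end.

(* Group-based models.  G is the finite group gT (written multiplicatively   *)
(* in MathComp; g_1 + ... + g_k becomes the ordered product g_1 * ... * g_k).*)
Section GroupBased.
Variables (K : fieldType) (gT : finGroupType).

Definition tup (n : nat) := {ffun 'I_n -> gT}.

(* K[q] : one variable q_{g_1 ... g_n} per n-tuple of group elements *)
Definition qring (n : nat) := {mpoly K[#|tup n|]}.
(* K[a] : one variable a^(e)_h per edge e (indexed by 'I_m) and h in G *)
Definition aring (m : nat) := {mpoly K[#|{: 'I_m * gT}|]}.

(* g_e for an edge with de(e) = [iv.1, iv.1 + iv.2), summed in increasing order *)
Definition isum n (g : tup n) (iv : nat * nat) : gT :=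
  (\prod_(i < n | (iv.1 <= i < iv.1 + iv.2)%N) g i)%g.

Definition phi_img (t : rtree) (g : tup (nleaves t)) : aring (size (edges t)) :=
  \prod_(j < size (edges t)) 'X_(enum_rank (j, isum g (nth (0, 0)%N (edges t) j))).

Definition phiGT (t : rtree) : qring (nleaves t) -> aring (size (edges t)) :=
  mmap (@mpolyC _ K) (fun v => phi_img (enum_val v)).

Definition IGT (t : rtree) : qring (nleaves t) -> Prop :=
  fun f => @phiGT t f = 0.

End GroupBased.

Arguments phiGT : clear implicits.
Arguments IGT : clear implicits.

Definition ideal_gen (R : comNzRingType) (S : R -> Prop) (f : R) : Prop :=
  exists s : seq (R * R),
    (forall pr, pr \in s -> S pr.2) /\ f = \sum_(pr <- s) pr.1 * pr.2.

Section TFP.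
Variables (K : fieldType) (D : eqType) (X Y : finType).
Variables (degx : X -> D) (degy : Y -> D).

(* variables z^i_{jk}: pairs (x_j, y_k) of the same degree *)
Definition tfp_var := {xy : X * Y | degx xy.1 == degy xy.2}.

Definition xring := {mpoly K[#|X|]}.
Definition yring := {mpoly K[#|Y|]}.
Definition xyring := {mpoly K[#|{: X + Y}|]}.
Definition zring := {mpoly K[#|{: tfp_var}|]}.

Definition extx : xring -> xyring :=
  mmap (@mpolyC _ K) (fun i => 'X_(enum_rank (inl (enum_val i)))).
Definition exty : yring -> xyring :=
  mmap (@mpolyC _ K) (fun i => 'X_(enum_rank (inr (enum_val i)))).

Definition tfp_psi : zring -> xyring :=
  mmap (@mpolyC _ K) (fun i => let z := enum_val i in
     'X_(enum_rank (inl (val z).1)) * 'X_(enum_rank (inr (val z).2))).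

(* I x_A J = ker (K[z] -> K[x]/I (x)_K K[y]/J), realised through the         *)
(* canonical isomorphism K[x]/I (x)_K K[y]/J = K[x,y]/(I K[x,y] + J K[x,y]).  *)
Definition tfp (I : xring -> Prop) (J : yring -> Prop) : zring -> Prop :=
  fun f => ideal_gen
    (fun u => (exists p, I p /\ u = extx p) \/ (exists p, J p /\ u = exty p))
    (tfp_psi f).

End TFP.

Section Split.
Variables (K : fieldType) (gT : finGroupType).

Definition unitv (h : gT) : {ffun gT -> int} := [ffun h' => ((h' == h) : int)].

(* j-th entry (0-based) of a tuple, 1 if out of range *)
Definition gat n (g : tup gT n) (j : nat) : gT :=
  match (insub j : option 'I_n) with Some j' => g j' | None => 1%g end.

Definition degplus n (x : tup gT n) := unitv (gat x 0).
Definition degminus k (y : tup gT k) := unitv (\prod_(i < k) y i)%g.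

Variables (nplus k : nat).
Hypothesis nplus_gt0 : (0 < nplus)%N.

Definition hsum n (g : tup gT n) : gT := (\prod_(i < k) gat g i)%g.

(* q_{g_1...g_n} |-> (q_{h g_{k+1}...g_n}, q_{g_1...g_k}), h = g_1+...+g_k *)
Definition xplus n (g : tup gT n) : tup gT nplus :=
  [ffun i : 'I_nplus => if (i == 0 :> nat) then hsum g else gat g (k + i - 1)].
Definition yminus n (g : tup gT n) : tup gT k := [ffun i : 'I_k => gat g i].

Lemma deg_match n (g : tup gT n) :
  degplus (xplus g) == degminus (yminus g).
Proof.
rewrite /degplus /degminus /gat; case: insubP => [i _ /= i0|]; last by rewrite /= nplus_gt0.
rewrite ffunE i0 eqxx /hsum; apply/eqP; congr unitv; apply: eq_bigr => j _.
by rewrite ffunE /gat.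
Qed.

Definition zvar n (g : tup gT n) : tfp_var (@degplus nplus) (@degminus k) :=
  exist _ (xplus g, yminus g) (deg_match g).

Definition qsplit n : qring K gT n -> zring K (@degplus nplus) (@degminus k) :=
  mmap (@mpolyC _ K) (fun i => 'X_(enum_rank (zvar (enum_val i)))).

End Split.

(* The parametrization factors along e.  With the edges of T listed as those
   before T_e^-, those of T_e^-, and those after, phi_T(q_g) is the product of
   a relabelling rho+ of phi_{T_e^+}(q_{h g_(k+1) ... g_n}), sending the
   variables of the new leaf edge to 1, and a relabelling rho- of
   phi_{T_e^-}(q_{g_1 ... g_k}); the projections pi+ and pi-, which keep the
   variables of one side only (e becoming the new leaf edge of T_e^+), recover
   both factors from phi_T(q_g).  The factorization shows that phi_T kills the
   toric fiber product.  Conversely, the kernel of the monomial map phi_T is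
   spanned by binomials q^m - q^m' with equal images; such a binomial becomes
   x y - x' y' = y (x - x') + x' (y - y') in the fiber product ring, and
   applying pi+ and pi- puts x - x' in I_{G,T_e^+} and y - y' in I_{G,T_e^-}. *)

From HB Require Import structures.
From mathcomp Require Import all_boot all_order all_algebra all_fingroup.
From mathcomp Require Import mpoly zify.

Set Implicit Arguments.
Unset Strict Implicit.
Unset Printing Implicit Defensive.

Import GRing.Theory.

(* Keeps [nleaves (RNode cs)] folded instead of exposing the match on [cs]. *)
Arguments nleaves : simpl nomatch.

(** * Leaf intervals of the edges of a planar tree *)

Definition children (t : rtree) : seq rtree := let: RNode cs := t in cs.

Fixpoint forest_eints (o : nat) (l : seq rtree) : seq (nat * nat) :=
  if l is c :: l' then eints c o ++ forest_eints (o + nleaves c) l' else [::].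

Lemma eintsE t o : eints t o = (o, nleaves t) :: forest_eints o (children t).
Proof. by case: t => cs /=; congr cons; elim: cs o => //= c cs IH o; rewrite IH. Qed.

Lemma forest_eints_cat l1 l2 o :
  forest_eints o (l1 ++ l2) =
  forest_eints o l1 ++ forest_eints (o + sumn (map nleaves l1)) l2.
Proof. by elim: l1 o => /= [|c l1 IH] o; rewrite ?addn0 // IH catA addnA. Qed.

Definition all_trees (P : rtree -> Prop) : seq rtree -> Prop :=
  foldr (fun c Q => P c /\ Q) True.

Lemma all_treesW (P : rtree -> Prop) l : (forall t, P t) -> all_trees P l.
Proof. by move=> HP; elim: l => //= c l IH; split. Qed.

Definition rtree_nested_ind (P : rtree -> Prop)
    (IH : forall cs, all_trees P cs -> P (RNode cs)) : forall t, P t :=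
  fix F t := let: RNode cs := t in
    IH cs ((fix G l : all_trees P l :=
              match l return all_trees P l with
              | [::] => I
              | c :: l' => conj (F c) (G l')
              end) cs).

Lemma sumn_le_nleaves cs : sumn (map nleaves cs) <= nleaves (RNode cs).
Proof. by case: cs. Qed.

Lemma nleaves_cat l1 c l2 :
  nleaves (RNode (l1 ++ c :: l2)) =
  sumn (map nleaves l1) + nleaves c + sumn (map nleaves l2).
Proof. by case: l1 => [|? ?]; rewrite /= ?map_cat ?sumn_cat /= ?addnA. Qed.

Definition within (lo hi : nat) (iv : nat * nat) :=
  (lo <= iv.1) && (iv.1 + iv.2 <= hi).

Lemma forest_eints_within_of l o :
  all_trees (fun c => forall o, all (within o (o + nleaves c)) (eints c o)) l ->
  all (within o (o + sumn (map nleaves l))) (forest_eints o l).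
Proof.
elim: l o => //= c l IH o [Hc Hl]; rewrite all_cat.
by apply/andP; split; [apply: sub_all (Hc o) | apply: sub_all (IH _ Hl)];
  move=> iv /andP[lo_iv iv_hi]; apply/andP; split; lia.
Qed.

Lemma eints_within t o : all (within o (o + nleaves t)) (eints t o).
Proof.
elim/rtree_nested_ind: t o => cs IH o; rewrite eintsE /= {1}/within /= leqnn leqnn /=.
apply: sub_all (forest_eints_within_of o IH) => iv /andP[lo_iv iv_hi].
apply/andP; split=> //; apply: leq_trans iv_hi _.
by rewrite leq_add2l sumn_le_nleaves.
Qed.

Lemma forest_eints_within l o :
  all (within o (o + sumn (map nleaves l))) (forest_eints o l).
Proof. by apply: forest_eints_within_of; apply: all_treesW => c o'; apply: eints_within. Qed.

Definition shift_iv (d : nat) (iv : nat * nat) := (iv.1 + d, iv.2).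

Lemma forest_eints_shift_of l o d :
  all_trees (fun c => forall o, eints c (o + d) = map (shift_iv d) (eints c o)) l ->
  forest_eints (o + d) l = map (shift_iv d) (forest_eints o l).
Proof. by elim: l o => //= c l IH o [Hc Hl]; rewrite map_cat Hc -IH // addnAC. Qed.

Lemma eints_shift t o d : eints t (o + d) = map (shift_iv d) (eints t o).
Proof.
by elim/rtree_nested_ind: t o => cs IH o; rewrite !eintsE /= (forest_eints_shift_of _ IH).
Qed.

Lemma forest_eints_shift l o d :
  forest_eints (o + d) l = map (shift_iv d) (forest_eints o l).
Proof. by apply: forest_eints_shift_of; apply: all_treesW => c o'; apply: eints_shift. Qed.

Lemma split_at_nth (cs : seq rtree) i :
  i < size cs -> cs = take i cs ++ nth Leaf cs i :: drop i.+1 cs.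
Proof. by move=> Hi; rewrite -drop_nth // cat_take_drop. Qed.

Lemma nleaves_graft_leaf p t s : subtree t p = Some s ->
  nleaves (graft t p Leaf) + (nleaves s).-1 = nleaves t /\
  offset t p + nleaves s <= nleaves t.
Proof.
have k_gt0 := nleaves_gt0 s.
elim: p t => [|i p IH] [cs]; first by move=> [Es]; subst s; rewrite /=; lia.
rewrite [subtree _ _]/= [graft _ _ _]/= [offset _ _]/=.
case: ifP => // Hi /IH [IH1 IH2].
have Ecs : nleaves (RNode cs) = sumn (map nleaves (take i cs)) +
    nleaves (nth Leaf cs i) + sumn (map nleaves (drop i.+1 cs)).
  by rewrite {1}(split_at_nth Hi) nleaves_cat.
by rewrite set_nthE Hi nleaves_cat; lia.
Qed.

(* The leaf interval, after the [k] leaves [o, ..., o + k - 1] of a subtree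
   are merged into a single leaf, of the edge with leaf interval [iv]. *)
Definition contract_iv (o k : nat) (iv : nat * nat) :=
  if o + k <= iv.1 then (iv.1 - k.-1, iv.2)
  else if o + k <= iv.1 + iv.2 then (iv.1, iv.2 - k.-1) else iv.

Definition left_or_above (o k : nat) (iv : nat * nat) :=
  (iv.1 + iv.2 <= o) || (iv.1 <= o) && (o + k <= iv.1 + iv.2).

Definition right_of (o k : nat) (iv : nat * nat) := o + k <= iv.1.

Lemma contract_left o k iv : iv.1 + iv.2 <= o -> contract_iv o k iv = iv.
Proof.
case: iv => a L /= h; rewrite /contract_iv /=.
by case: ifP => ?; [|case: ifP => ? //]; congr pair; lia.
Qed.

Lemma contract_shift o k iv : o < iv.1 -> contract_iv o k (shift_iv k.-1 iv) = iv.
Proof. by case: iv => a L /= h; rewrite /contract_iv /= ifT ?addnK //; lia. Qed.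

Lemma contract_cover o k a L :
  0 < k -> a <= o -> o + k <= a + L -> contract_iv o k (a, L) = (a, L - k.-1).
Proof. by move=> k_gt0 a_le cover; rewrite /contract_iv /= ifF ?cover //; lia. Qed.

Lemma map_contract_left o k off l : off + sumn (map nleaves l) <= o ->
  map (contract_iv o k) (forest_eints off l) = forest_eints off l.
Proof.
move=> l_le; rewrite -[RHS]map_id; apply/eq_in_map => iv.
by move/(allP (forest_eints_within l off)) => /andP[_ iv_hi]; apply: contract_left; lia.
Qed.

Lemma map_contract_right o k off l : o < off ->
  map (contract_iv o k) (forest_eints (off + k.-1) l) = forest_eints off l.
Proof.
move=> lt_o; rewrite forest_eints_shift -map_comp -[RHS]map_id; apply/eq_in_map => iv.
by move/(allP (forest_eints_within l off)) => /andP[lo_iv _]; apply: contract_shift; lia.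
Qed.

Lemma eints_graft_leaf p : forall t s off, subtree t p = Some s ->
  let o := off + offset t p in let k := nleaves s in
  exists pre suf, [/\ eints t off = pre ++ eints s o ++ suf,
    eints (graft t p Leaf) off =
      map (contract_iv o k) pre ++ (o, 1) :: map (contract_iv o k) suf,
    all (left_or_above o k) pre & all (right_of o k) suf].
Proof.
elim: p => [|i p IH] [cs] s off.
  by move=> [<-] o k; exists [::], [::]; rewrite /o /= addn0 cats0.
rewrite [subtree _ _]/=; case: ifP => // Hi Hc o k.
set c := nth Leaf cs i; set l1 := take i cs; set l2 := drop i.+1 cs.
set c' := graft c p Leaf; set off' := off + sumn (map nleaves l1).
have [pre [suf [E1 E2 Hpre Hsuf]]] := IH c s off' Hc.
have [Hn Hb] := nleaves_graft_leaf Hc; rewrite -/c -/c' in Hn Hb.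
have k_gt0 : 0 < k := nleaves_gt0 s.
have Ho : o = off' + offset c p by rewrite /o /= addnA.
have Ecs : cs = l1 ++ c :: l2 := split_at_nth Hi.
have HN : nleaves (RNode cs) =
    sumn (map nleaves l1) + nleaves c + sumn (map nleaves l2).
  by rewrite {1}Ecs nleaves_cat.
have Eoff' : off' = off + sumn (map nleaves l1) by [].
exists ((off, nleaves (RNode cs)) :: forest_eints off l1 ++ pre),
       (suf ++ forest_eints (off' + nleaves c) l2); split.
- rewrite eintsE [children _]/= [in forest_eints _ cs]Ecs forest_eints_cat /=.
  by rewrite E1 -Ho -!catA.
- have -> : off' + nleaves c = off' + nleaves c' + k.-1 by lia.
  rewrite [graft _ _ _]/= set_nthE Hi eintsE /= forest_eints_cat /= E2 -Ho.
  rewrite contract_cover //; try lia.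
  rewrite map_cat map_contract_left; last lia.
  rewrite map_cat map_contract_right; last lia.
  rewrite nleaves_cat -!catA -/l1 -/l2 -/c -/c'.
  by congr (_ :: _); congr pair; lia.
- rewrite Ho /= all_cat Hpre andbT {1}/left_or_above /=; apply/andP; split.
    by apply/orP; right; apply/andP; split; lia.
  apply/allP => iv /(allP (forest_eints_within l1 off)) /andP[_ h].
  by rewrite /left_or_above; lia.
- rewrite Ho all_cat Hsuf /=.
  apply/allP => iv /(allP (forest_eints_within l2 (off' + nleaves c))) /andP[h _].
  by rewrite /right_of; lia.
Qed.

Lemma edges_graft_leaf t p s : subtree t p = Some s -> offset t p = 0%N ->
  let k := nleaves s in
  exists pre rest suf, [/\ edges t = pre ++ ((0, k)%N :: rest) ++ suf,
    edges s = (0, k)%N :: rest,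
    edges (graft t p Leaf) =
      map (contract_iv 0 k) pre ++ (0, 1)%N :: map (contract_iv 0 k) suf &
    [/\ all (left_or_above 0 k) pre, all (right_of 0 k) suf &
        all (within 0 k) ((0, k)%N :: rest)]].
Proof.
move=> Hsub Hde k; have [pre [suf [Et Ep Hpre Hsuf]]] := eints_graft_leaf 0 Hsub.
rewrite Hde addn0 in Et Ep Hpre Hsuf.
exists pre, (forest_eints 0 (children s)), suf.
rewrite /edges Et Ep /k -eintsE; split=> //.
by have := eints_within s 0; rewrite add0n.
Qed.

(** * Edge sums of the split labellings *)

Section IntervalSums.
Variable gT : finGroupType.

Lemma gat_in m (h : tup gT m) i (Hi : i < m) : gat h i = h (Ordinal Hi).
Proof. by rewrite /gat insubT. Qed.

Lemma isumE n (g : tup gT n) a L :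
  isum g (a, L) = (\prod_(a <= i < minn (a + L) n) gat g i)%g.
Proof.
rewrite (big_nat_widen _ _ _ _ _ (geq_minr _ _)) big_geq_mkord /isum.
apply: eq_big => [i|i _]; last by rewrite /gat valK.
by have := ltn_ord i; rewrite /= leq_min; case: (a <= i); case: (i < a + L) => /=; lia.
Qed.

Variables (np k n : nat).
Hypotheses (Hn : np + k.-1 = n) (k_gt0 : 0 < k) (np_gt0 : 0 < np).
Variable g : tup gT n.
Local Notation xg := (xplus np k g).
Local Notation yg := (yminus k g).

Lemma gat_xplus0 : gat xg 0 = (\prod_(0 <= i < k) gat g i)%g.
Proof. by rewrite (gat_in _ np_gt0) ffunE /hsum big_mkord. Qed.

Lemma gat_xplus i : 0 < i < np -> gat xg i = gat g (i + k.-1).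
Proof.
case/andP=> i_gt0 i_lt; rewrite (gat_in _ i_lt) ffunE /= ifF; last by case: i i_gt0 {i_lt}.
by congr gat; lia.
Qed.

Lemma isum_yminus a L : a + L <= k -> isum g (a, L) = isum yg (a, L).
Proof.
move=> h; rewrite !isumE (minn_idPl (leq_trans h _)) ?(minn_idPl h); last lia.
by apply: eq_big_nat => i /andP[_ hi]; rewrite (gat_in _ (leq_trans hi h)) ffunE.
Qed.

Lemma isum_xplus iv : left_or_above 0 k iv || right_of 0 k iv ->
  isum g iv = isum xg (contract_iv 0 k iv).
Proof.
case: iv => a L; rewrite /left_or_above /right_of /contract_iv /=.
have [k_le_a _|a_lt_k] := leqP k a.
  rewrite !isumE; have [a' Ea] : exists a', a = a' + k.-1 by exists (a - k.-1); lia.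
  rewrite Ea addnK -[in LHS](_ : minn (a' + L) np + k.-1 = minn (a' + k.-1 + L) n); last lia.
  rewrite big_addn addnK; apply: eq_big_nat => i hi; rewrite gat_xplus //; lia.
have [k_le_aL cover|aL_lt_k] := leqP k (a + L); last first.
  move=> h; have [-> ->] : a = 0 /\ L = 0 by lia.
  by rewrite !isumE !big_geq //; lia.
have -> : a = 0 by lia.
rewrite !isumE (@big_cat_nat _ _ _ k) //; last lia.
rewrite [RHS]big_ltn; last lia.
rewrite gat_xplus0; congr (_ * _)%g.
rewrite -[in LHS](_ : minn (L - k.-1) np + k.-1 = minn L n); last lia.
rewrite -[in LHS](_ : 1 + k.-1 = k); last lia.
by rewrite big_addn addnK; apply: eq_big_nat => i hi; rewrite gat_xplus //; lia.
Qed.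

End IntervalSums.

(** * Substitutions and generated ideals *)

Local Open Scope ring_scope.

Section Substitution.
Variable R : comNzRingType.

Lemma eq_mmap n (S : nzRingType) (f f' : R -> S) (h h' : 'I_n -> S) p :
  f =1 f' -> h =1 h' -> mmap f h p = mmap f' h' p.
Proof.
move=> eq_f eq_h; rewrite /mmap; apply: eq_bigr => m _.
by rewrite eq_f (mmap1_eq _ eq_h).
Qed.

Lemma rmorph_mmapE n (S : comNzRingType) (F : {rmorphism {mpoly R[n]} -> S}) p :
  F p = mmap (F \o @mpolyC n R) (fun i => F 'X_i) p.
Proof.
rewrite [p in F p]mpolyE rmorph_sum /mmap; apply: eq_bigr => m _.
rewrite -mul_mpolyC rmorphM mpolyXE_id rmorph_prod /mmap1; congr (_ * _).
by apply: eq_bigr => i _; rewrite rmorphXn.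
Qed.

Definition msubst (T : finType) n (h : T -> {mpoly R[n]}) :
    {mpoly R[#|T|]} -> {mpoly R[n]} :=
  mmap (@mpolyC n R) (fun i => h (enum_val i)).

Variables (T : finType) (n : nat) (h : T -> {mpoly R[n]}).

HB.instance Definition _ :=
  GRing.RMorphism.copy (msubst h) (mmap (@mpolyC n R) (fun i => h (enum_val i))).

Lemma msubstX x : msubst h 'X_(enum_rank x) = h x.
Proof. by rewrite /msubst mmapX mmap1U enum_rankK. Qed.

Lemma msubstC c : msubst h c%:MP = c%:MP.
Proof. exact: mmapC. Qed.

Lemma msubstZ c p : msubst h (c *: p) = c *: msubst h p.
Proof. by rewrite /msubst mmapZ mul_mpolyC. Qed.

Lemma msubstXm m : msubst h 'X_[m] = \prod_(i < #|T|) h (enum_val i) ^+ m i.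
Proof. exact: mmapX. Qed.

End Substitution.

Lemma eq_msubst (R : comNzRingType) (T : finType) n (h h' : T -> {mpoly R[n]}) p :
  h =1 h' -> msubst h p = msubst h' p.
Proof. by move=> eq_h; apply: eq_mmap => // i; rewrite eq_h. Qed.

Lemma msubst_comp (R : comNzRingType) (T U : finType) n
    (h : T -> {mpoly R[#|U|]}) (h' : U -> {mpoly R[n]}) p :
  msubst h' (msubst h p) = msubst (msubst h' \o h) p.
Proof.
have /= -> := rmorph_mmapE (msubst h' \o msubst h) p.
by apply: eq_mmap => [c|i] /=; rewrite ?msubstC // /msubst mmapX mmap1U.
Qed.

Lemma msubstXmM (R : comNzRingType) (T : finType) n (h1 h2 : T -> {mpoly R[n]}) m :
  msubst (fun x => h1 x * h2 x) 'X_[m] = msubst h1 'X_[m] * msubst h2 'X_[m].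
Proof. by rewrite !msubstXm -big_split; apply: eq_bigr => i _; rewrite exprMn. Qed.

Section IdealGen.
Variables (R : comNzRingType) (S : R -> Prop).

Lemma ideal_gen0 : ideal_gen S 0.
Proof. by exists [::]; rewrite big_nil. Qed.

Lemma ideal_genD a b : ideal_gen S a -> ideal_gen S b -> ideal_gen S (a + b).
Proof.
move=> [s1 [S1 ->]] [s2 [S2 ->]]; exists (s1 ++ s2); rewrite big_cat; split=> //.
by move=> pr; rewrite mem_cat => /orP[]; [apply: S1 | apply: S2].
Qed.

Lemma ideal_genMl r a : ideal_gen S a -> ideal_gen S (r * a).
Proof.
move=> [s [Ss ->]]; exists [seq (r * pr.1, pr.2) | pr <- s]; split.
  by move=> _ /mapP[pr s_pr ->]; apply: (Ss pr).
by rewrite big_map mulr_sumr; apply: eq_bigr => pr _; rewrite mulrA.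
Qed.

Lemma ideal_gen_sum (I : Type) (s : seq I) (F : I -> R) :
  (forall i, ideal_gen S (F i)) -> ideal_gen S (\sum_(i <- s) F i).
Proof.
move=> SF; elim: s => [|i s IH]; first by rewrite big_nil; apply: ideal_gen0.
by rewrite big_cons; apply: ideal_genD.
Qed.

Lemma mem_ideal_gen u : S u -> ideal_gen S u.
Proof.
by move=> Su; exists [:: (1, u)]; rewrite big_seq1 mul1r; split=> // pr /[1!inE] /eqP ->.
Qed.

Lemma ideal_gen_rmorph_eq0 (R' : nzRingType) (F : {rmorphism R -> R'}) a :
  (forall u, S u -> F u = 0) -> ideal_gen S a -> F a = 0.
Proof.
move=> FS [s [Ss ->]]; rewrite rmorph_sum big_seq big1 // => pr s_pr.
by rewrite rmorphM (FS pr.2) ?mulr0 //; exact: Ss.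
Qed.

End IdealGen.

(** * Kernels of monomial maps as toric fiber products *)

Lemma monomial_kernel_binomial (R : comNzRingType) n N (mu : 'I_n -> 'X_{1..N})
    (f : {mpoly R[n]}) :
  let phi := mmap (@mpolyC N R) (fun i => 'X_[mu i]) in
  phi f = 0 -> exists r : 'X_{1..n} -> 'X_{1..n},
    (forall m, phi 'X_[r m] = phi 'X_[m]) /\
    f = \sum_(m <- msupp f) f@_m *: ('X_[m] - 'X_[r m]).
Proof.
move=> phi phi_f0; set S := msupp f.
pose w (m : 'X_{1..n}) := (\sum_(i < n) mu i *+ m i)%MM.
have phiX m : phi 'X_[m] = 'X_[w m] by rewrite /phi mmapX /mmap1 mprodXnE.
pose r m := nth m S (find (fun m' => w m' == w m) S).
have w_r m : w (r m) = w m.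
  have [S_wm|] := boolP (has (fun m' => w m' == w m) S).
    exact/eqP/(nth_find m S_wm).
  by rewrite /r has_find -leqNgt => /(nth_default m) ->.
have eq_r : {in S &, forall m m', (r m == r m') = (w m == w m')}.
  move=> m m' Sm Sm'; apply/eqP/eqP => [E|E]; first by rewrite -w_r E w_r.
  by rewrite /r E; apply: set_nth_default; rewrite -has_find; apply/hasP; exists m'.
exists r; split=> [m|]; first by rewrite !phiX w_r.
suff r_sum0 : \sum_(m <- S) f@_m *: 'X_[r m] = 0.
  rewrite (eq_bigr (fun m => f@_m *: 'X_[m] - f@_m *: 'X_[r m])) => [|m _].
    by rewrite sumrB r_sum0 subr0 {1}[f]mpolyE.
  by rewrite scalerBr.
have phi_fE : phi f = \sum_(m <- S) f@_m *: 'X_[w m].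
  rewrite /phi {1}[f]mpolyE raddf_sum -/phi; apply: eq_bigr => m _.
  by rewrite /= mmapZ -/phi phiX mul_mpolyC.
apply/mpolyP => u; rewrite mcoeff0 raddf_sum /=.
under eq_bigr do rewrite mcoeffZ mcoeffX.
have [/hasP[m1 S_m1 /eqP r_m1]|no_u] := boolP (has (fun m => r m == u) S); last first.
  rewrite big_seq big1 // => m Sm; case: eqP => [r_m|]; last by rewrite mulr0.
  by case/hasP: no_u; exists m; rewrite ?r_m.
have := congr1 (mcoeff (w m1)) phi_fE; rewrite phi_f0 mcoeff0 raddf_sum /= => coef0.
rewrite [RHS]coef0 !big_seq; apply: eq_bigr => m Sm; rewrite mcoeffZ mcoeffX.
by rewrite -r_m1 eq_r // eq_sym.
Qed.

Section FiberProductSubstitutions.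
Variables (K : fieldType) (D : eqType) (X Y : finType) (degx : X -> D) (degy : Y -> D).

Lemma extxE (p : xring K X) : extx Y p = msubst (fun x => 'X_(enum_rank (inl x : X + Y))) p.
Proof. by []. Qed.

Lemma extyE (p : yring K Y) : exty X p = msubst (fun y => 'X_(enum_rank (inr y : X + Y))) p.
Proof. by []. Qed.

Lemma tfp_psiE (p : zring K degx degy) : tfp_psi p = msubst (fun v : tfp_var degx degy =>
  'X_(enum_rank (inl (val v).1)) * 'X_(enum_rank (inr (val v).2)) : xyring K X Y) p.
Proof. by []. Qed.

End FiberProductSubstitutions.

Section KernelFiberProduct.
Variables (K : fieldType) (D : eqType) (X Y Q A Ax Ay : finType).
Variables (degx : X -> D) (degy : Y -> D) (z : Q -> tfp_var degx degy).
Variables (phi : Q -> {mpoly K[#|A|]}).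
Variables (phix : X -> {mpoly K[#|Ax|]}) (phiy : Y -> {mpoly K[#|Ay|]}).
Variables (rx : Ax -> {mpoly K[#|A|]}) (ry : Ay -> {mpoly K[#|A|]}).
Variables (px : A -> {mpoly K[#|Ax|]}) (py : A -> {mpoly K[#|Ay|]}).
Variable mu : Q -> 'X_{1..#|A|}.

Hypothesis phi_monomial : forall q, phi q = 'X_[mu q].
Hypothesis phi_factor : forall q,
  phi q = msubst rx (phix (val (z q)).1) * msubst ry (phiy (val (z q)).2).
Hypothesis phix_proj : forall q, msubst px (phi q) = phix (val (z q)).1.
Hypothesis phiy_proj : forall q, msubst py (phi q) = phiy (val (z q)).2.

Local Notation zsplit :=
  (msubst (fun q => 'X_(enum_rank (z q)) : zring K degx degy)).
Local Notation xsplit := (msubst (fun q => 'X_(enum_rank (val (z q)).1) : xring K X)).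
Local Notation ysplit := (msubst (fun q => 'X_(enum_rank (val (z q)).2) : yring K Y)).
Local Notation Ix := (fun p => msubst phix p = 0).
Local Notation Iy := (fun p => msubst phiy p = 0).
Local Notation gens := (fun u => (exists p, Ix p /\ u = extx Y p) \/
                                 (exists p, Iy p /\ u = exty X p)).

Lemma tfp_psi_split_monomial m :
  tfp_psi (zsplit 'X_[m]) = extx Y (xsplit 'X_[m]) * exty X (ysplit 'X_[m]).
Proof.
rewrite tfp_psiE extxE extyE !msubst_comp -msubstXmM; apply: eq_msubst => q /=.
by rewrite !msubstX.
Qed.

Lemma tfp_kernel_sound f : tfp Ix Iy (zsplit f) -> msubst phi f = 0.
Proof.
pose Phi := msubst (fun v : X + Y =>
  match v with inl x => msubst rx (phix x) | inr y => msubst ry (phiy y) end).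
have Phi_psi : Phi (tfp_psi (zsplit f)) = msubst phi f.
  rewrite /Phi tfp_psiE !msubst_comp; apply: eq_msubst => q /=.
  by rewrite (@msubstX _ (tfp_var degx degy)) /= rmorphM /= !msubstX phi_factor.
have Phi_x p : Phi (extx Y p) = msubst rx (msubst phix p).
  by rewrite /Phi extxE !msubst_comp; apply: eq_msubst => x /=; rewrite msubstX.
have Phi_y p : Phi (exty X p) = msubst ry (msubst phiy p).
  by rewrite /Phi extyE !msubst_comp; apply: eq_msubst => y /=; rewrite msubstX.
rewrite -Phi_psi; apply: ideal_gen_rmorph_eq0 => _ [[p [p0 ->]]|[p [p0 ->]]].
  by rewrite /= -/Phi Phi_x p0 rmorph0.
by rewrite /= -/Phi Phi_y p0 rmorph0.
Qed.

Lemma phix_xsplit p : msubst phix (xsplit p) = msubst px (msubst phi p).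
Proof. by rewrite !msubst_comp; apply: eq_msubst => q /=; rewrite msubstX phix_proj. Qed.

Lemma phiy_ysplit p : msubst phiy (ysplit p) = msubst py (msubst phi p).
Proof. by rewrite !msubst_comp; apply: eq_msubst => q /=; rewrite msubstX phiy_proj. Qed.

Lemma tfp_binomial m1 m2 : msubst phi 'X_[m1] = msubst phi 'X_[m2] ->
  ideal_gen gens (tfp_psi (zsplit ('X_[m1] - 'X_[m2]))).
Proof.
move=> eq_phi; rewrite rmorphB /= tfp_psiE rmorphB /= -!tfp_psiE.
rewrite !tfp_psi_split_monomial.
set x1 := extx Y _; set x2 := extx Y _; set y1 := exty X _; set y2 := exty X _.
have -> : x1 * y1 - x2 * y2 = y1 * (x1 - x2) + x2 * (y1 - y2).
  by rewrite !mulrBr [y1 * x1]mulrC [y1 * x2]mulrC addrA subrK.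
apply: ideal_genD; apply: ideal_genMl; apply: mem_ideal_gen; [left|right].
  exists (xsplit 'X_[m1] - xsplit 'X_[m2]); split; last by rewrite extxE rmorphB.
  by rewrite rmorphB /= !phix_xsplit eq_phi subrr.
exists (ysplit 'X_[m1] - ysplit 'X_[m2]); split; last by rewrite extyE rmorphB.
by rewrite rmorphB /= !phiy_ysplit eq_phi subrr.
Qed.

Lemma tfp_kernel_complete f : msubst phi f = 0 -> tfp Ix Iy (zsplit f).
Proof.
have phiE p : msubst phi p = mmap (@mpolyC _ K) (fun i => 'X_[mu (enum_val i)]) p.
  by apply: eq_mmap => // i; rewrite phi_monomial.
rewrite phiE => /monomial_kernel_binomial[r [r_phi ->]].
rewrite /tfp (raddf_sum zsplit) tfp_psiE raddf_sum; apply: ideal_gen_sum => m /=.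
rewrite !msubstZ -mul_mpolyC; apply/ideal_genMl/tfp_binomial.
by rewrite !phiE r_phi.
Qed.

Theorem kernel_tfp f : msubst phi f = 0 <-> tfp Ix Iy (zsplit f).
Proof. by split; [apply: tfp_kernel_complete | apply: tfp_kernel_sound]. Qed.

End KernelFiberProduct.

(** * Factorization of the parametrization along an edge *)

Section IndexedProduct.
Variable R : comNzRingType.

Fixpoint iprod (T : Type) (F : nat -> T -> R) (l : seq T) : R :=
  if l is x :: l' then F 0 x * iprod (fun j => F j.+1) l' else 1.

Variable T : Type.
Implicit Types (F : nat -> T -> R) (l : seq T).

Lemma iprodE x0 F l : iprod F l = \prod_(j < size l) F j (nth x0 l j).
Proof. by elim: l F => [|x l IH] F /=; rewrite ?big_ord0 // big_ord_recl IH. Qed.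

Lemma iprod_cat F l1 l2 :
  iprod F (l1 ++ l2) = iprod F l1 * iprod (fun j => F (size l1 + j)%N) l2.
Proof. by elim: l1 F => [|x l1 IH] F /=; rewrite ?mul1r // IH mulrA. Qed.

Lemma iprod_map (U : Type) F (f : U -> T) (l : seq U) :
  iprod F (map f l) = iprod (fun j u => F j (f u)) l.
Proof. by elim: l F => //= x l IH F; rewrite IH. Qed.

Lemma eq_iprod x0 F F' l :
    (forall j, (j < size l)%N -> F j (nth x0 l j) = F' j (nth x0 l j)) ->
  iprod F l = iprod F' l.
Proof.
elim: l F F' => //= x l IH F F' eqF; rewrite (eqF 0%N) //; congr (_ * _).
by apply: IH => j; apply: (eqF j.+1).
Qed.

Lemma iprod1 l : iprod (fun _ _ => 1) l = 1.
Proof. by elim: l => //= x l ->; rewrite mulr1. Qed.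

End IndexedProduct.

Lemma rmorph_iprod (R S : comNzRingType) (f : {rmorphism R -> S}) (T : Type) F (l : seq T) :
  f (iprod F l) = iprod (fun j x => f (F j x)) l.
Proof. by elim: l F => /= [|x l IH] F; rewrite ?rmorph1 // rmorphM IH. Qed.

Section EdgeVariables.
Variables (K : fieldType) (gT : finGroupType).

Definition avar (m j : nat) (h : gT) : aring K gT m :=
  if insub j is Some j' then 'X_(enum_rank (j', h)) else 1.

Lemma phi_imgE t (g : tup gT (nleaves t)) :
  phi_img K g = iprod (fun j iv => avar (size (edges t)) j (isum g iv)) (edges t).
Proof. by rewrite /phi_img (iprodE (0, 0)%N); apply: eq_bigr => j _; rewrite /avar valK. Qed.

Lemma phi_img_monomial t (g : tup gT (nleaves t)) :
  phi_img K g = 'X_[\sum_(j < size (edges t))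
                      U_(enum_rank (j, isum g (nth (0, 0)%N (edges t) j)))].
Proof. by rewrite /phi_img -mprodXE. Qed.

Definition amorph (m m' : nat) (r : nat -> gT -> aring K gT m') :
    aring K gT m -> aring K gT m' :=
  msubst (fun a : 'I_m * gT => r a.1 a.2).

Lemma amorph_avar m m' (r : nat -> gT -> aring K gT m') j h :
  (j < m)%N -> amorph r (avar m j h) = r j h.
Proof. by move=> lt_jm; rewrite /amorph /avar insubT /= msubstX. Qed.

Lemma amorph_iprod (m m' : nat) (r : nat -> gT -> aring K gT m') (T : Type) F (l : seq T) :
  amorph (m := m) r (iprod F l) = iprod (fun j x => amorph (m := m) r (F j x)) l.
Proof. exact: rmorph_iprod. Qed.

End EdgeVariables.

Section EdgeFactorization.
Variables (K : fieldType) (gT : finGroupType) (t tplus s : rtree).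
Let n := nleaves t.
Let np := nleaves tplus.
Let k := nleaves s.
Hypothesis Hn : (np + k.-1)%N = n.
Variables (pre rest suf : seq (nat * nat)).
Let Em := (0, k)%N :: rest.
Hypotheses (Et : edges t = pre ++ Em ++ suf) (Es : edges s = Em).
Hypothesis Ep :
  edges tplus = map (contract_iv 0 k) pre ++ (0, 1)%N :: map (contract_iv 0 k) suf.
Hypotheses (Hpre : all (left_or_above 0 k) pre) (Hsuf : all (right_of 0 k) suf).
Hypothesis Hrest : all (within 0 k) Em.
Let P := size pre.
Let M := size Em.
Let m := size (edges t).
Let mp := size (edges tplus).
Let mm := size (edges s).

Definition rho_plus (j : nat) (h : gT) : aring K gT m :=
  if (j < P)%N then avar K m j h else if j == P then 1 else avar K m (j + M.-1) h.

Definition rho_minus (j : nat) (h : gT) : aring K gT m := avar K m (P + j) h.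

Definition pi_plus (j : nat) (h : gT) : aring K gT mp :=
  if (j < P)%N then avar K mp j h else if j == P then avar K mp P h
  else if (j < P + M)%N then 1 else avar K mp (j - M.-1) h.

Definition pi_minus (j : nat) (h : gT) : aring K gT mm :=
  if (P <= j < P + M)%N then avar K mm (j - P) h else 1.

Variable g : tup gT n.
Local Notation xg := (xplus np k g).
Local Notation yg := (yminus k g).

Let k_gt0 : (0 < k)%N := nleaves_gt0 s.
Let np_gt0 : (0 < np)%N := nleaves_gt0 tplus.
Let EM : M = (size rest).+1 := erefl.
Let Em_m : m = (P + M + size suf)%N. Proof. by rewrite /m Et !size_cat addnA. Qed.
Let Em_mm : mm = M. Proof. by rewrite /mm Es. Qed.

Lemma isum_pre j : (j < P)%N ->
  isum g (nth (0, 0)%N pre j) = isum xg (contract_iv 0 k (nth (0, 0)%N pre j)).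
Proof. by move=> lt_jP; apply: (isum_xplus Hn) => //; rewrite (all_nthP _ Hpre). Qed.

Lemma isum_suf j : (j < size suf)%N ->
  isum g (nth (0, 0)%N suf j) = isum xg (contract_iv 0 k (nth (0, 0)%N suf j)).
Proof. by move=> lt_j; apply: (isum_xplus Hn) => //; rewrite (all_nthP _ Hsuf) ?orbT. Qed.

Lemma isum_rest j : (j < M)%N -> isum g (nth (0, 0)%N Em j) = isum yg (nth (0, 0)%N Em j).
Proof.
move=> lt_jM; have := all_nthP (0, 0)%N Hrest j lt_jM.
by case: (nth _ _ _) => a L /andP[_ /= aL_le]; apply: (isum_yminus Hn).
Qed.

Lemma phi_img_factor :
  phi_img K g = amorph rho_plus (phi_img K xg) * amorph rho_minus (phi_img K yg).
Proof.
have plusE : amorph rho_plus (phi_img K xg) =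
    iprod (fun j iv => avar K m j (isum xg (contract_iv 0 k iv))) pre *
    iprod (fun j iv => avar K m (P + (M + j)) (isum xg (contract_iv 0 k iv))) suf.
  rewrite phi_imgE [X in iprod _ X]Ep amorph_iprod.
  rewrite (eq_iprod (x0 := (0, 0)%N) (F' := fun j iv => rho_plus j (isum xg iv)));
    last by move=> j lt_j /=; rewrite amorph_avar //; rewrite -Ep in lt_j.
  rewrite iprod_cat /= !iprod_map size_map -/P addn0 {2}/rho_plus ltnn eqxx mul1r.
  congr (_ * _); apply: (eq_iprod (x0 := (0, 0)%N)) => j lt_j /=; rewrite /rho_plus ?lt_j //.
  by rewrite !ifF; [congr avar|..]; lia.
have minusE : amorph rho_minus (phi_img K yg) =
    iprod (fun j iv => avar K m (P + j) (isum g iv)) Em.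
  rewrite phi_imgE [X in iprod _ X]Es amorph_iprod.
  apply: (eq_iprod (x0 := (0, 0)%N)) => j lt_j /=.
  by rewrite amorph_avar ?isum_rest // -/mm Em_mm.
rewrite plusE minusE phi_imgE [X in iprod _ X]Et !iprod_cat -/P -/M mulrCA [RHS]mulrC.
congr (_ * (_ * _)).
  by apply: (eq_iprod (x0 := (0, 0)%N)) => j /isum_pre ->.
by apply: (eq_iprod (x0 := (0, 0)%N)) => j /isum_suf ->.
Qed.

Lemma phi_img_pi_plus : amorph pi_plus (phi_img K g) = phi_img K xg.
Proof.
have isum_root : isum g (0, k)%N = isum xg (0, 1)%N.
  rewrite (isum_xplus Hn) /left_or_above /= ?leqnn ?orbT //.
  by congr isum; rewrite /contract_iv /= ifF ?leqnn; [congr pair|]; lia.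
rewrite !phi_imgE [X in iprod _ X]Et [X in _ = iprod _ X]Ep amorph_iprod.
rewrite (eq_iprod (x0 := (0, 0)%N) (F' := fun j iv => pi_plus j (isum g iv)));
  last by move=> j lt_j /=; rewrite amorph_avar // -/m Em_m;
    move: lt_j; rewrite !size_cat addnA.
rewrite !iprod_cat !iprod_map size_map -/P -/M /= addn0 -mulrA.
congr (_ * (_ * _)).
- by apply: (eq_iprod (x0 := (0, 0)%N)) => j lt_j /=; rewrite /pi_plus lt_j isum_pre.
- by rewrite /pi_plus ltnn eqxx isum_root.
rewrite (eq_iprod (x0 := (0, 0)%N) (F' := fun _ _ => 1) (l := rest)); last first.
  move=> j lt_j /=; rewrite /pi_plus ifF; last lia.
  by rewrite ifF ?ifT //; lia.
rewrite iprod1 mul1r iprod_map; apply: (eq_iprod (x0 := (0, 0)%N)) => j lt_j /=.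
rewrite /pi_plus ifF; last lia.
rewrite ifF; last lia.
rewrite ifF; last lia.
by rewrite isum_suf //; congr avar; lia.
Qed.

Lemma phi_img_pi_minus : amorph pi_minus (phi_img K g) = phi_img K yg.
Proof.
rewrite !phi_imgE [X in iprod _ X]Et [X in _ = iprod _ X]Es amorph_iprod.
rewrite (eq_iprod (x0 := (0, 0)%N) (F' := fun j iv => pi_minus j (isum g iv)));
  last by move=> j lt_j /=; rewrite amorph_avar // -/m Em_m;
    move: lt_j; rewrite !size_cat addnA.
rewrite !iprod_cat -/P -/M.
rewrite (eq_iprod (x0 := (0, 0)%N) (F' := fun _ _ => 1) (l := pre)); last first.
  by move=> j lt_j /=; rewrite /pi_minus ifF //; lia.
rewrite (eq_iprod (x0 := (0, 0)%N) (F' := fun _ _ => 1) (l := suf)); last first.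
  by move=> j lt_j /=; rewrite /pi_minus ifF //; lia.
rewrite !iprod1 mul1r mulr1; apply: (eq_iprod (x0 := (0, 0)%N)) => j lt_j /=.
by rewrite /pi_minus ifT -?isum_rest //; [congr avar|]; lia.
Qed.

End EdgeFactorization.

Lemma unitv_lin_indep (gT : finGroupType) (c : gT -> int) :
  \sum_(h : gT) (unitv h *~ c h) = 0 :> {ffun gT -> int} -> forall h, c h = 0.
Proof.
move=> sum0 h; have /= := congr1 (fun F : {ffun gT -> int} => F h) sum0.
rewrite sum_ffunE ffunE (bigD1 h) //= big1 => [|h' h'h].
  by rewrite ffunMzE /unitv ffunE eqxx addr0 => <-; rewrite mulrzz mul1r.
by rewrite ffunMzE /unitv ffunE eq_sym (negbTE h'h) mul0rz.
Qed.

Theorem theorem3p9 (K : fieldType) (gT : finGroupType)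
    (t : rtree) (p : seq nat) (s : rtree)
    (* e is the edge entering the vertex at position p of t, and T_e^- = s *)
    (Hsub : subtree t p = Some s)
    (* e is interior: its tail is not the root leaf, its head is not a leaf *)
    (Hint_tail : p != [::]) (Hint_head : ~~ is_leaf s)
    (* de(e) = {1, ..., k} *)
    (Hde : offset t p = 0%N) :
  let tplus := graft t p Leaf in
  let k := nleaves s in
  (forall c : gT -> int, \sum_(h : gT) (unitv h *~ c h) = 0 :> {ffun gT -> int} -> forall h, c h = 0)
  /\
  (forall f : qring K gT (nleaves t),
     IGT K gT t f <->
     @tfp K _ _ _ (@degplus gT (nleaves tplus)) (@degminus gT k)
       (IGT K gT tplus) (IGT K gT s)
       (qsplit k (nleaves_gt0 tplus) f)).
Proof.
move=> tplus k; split; first exact: unitv_lin_indep.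
have [Hn _] := nleaves_graft_leaf Hsub.
have [pre [rest [suf [Et Es Ep [Hpre Hsuf Hrest]]]]] := edges_graft_leaf Hsub Hde.
move=> f; refine (kernel_tfp (z := @zvar gT _ k (nleaves_gt0 tplus) (nleaves t))
  (phix := phi_img K (t := tplus)) (phiy := phi_img K (t := s)) (phi_img_monomial K (t := t)) _ _ _ f).
- exact: (phi_img_factor K Hn Et Es Ep Hpre Hsuf Hrest).
- exact: (phi_img_pi_plus K Hn Et Es Ep Hpre Hsuf Hrest).
- exact: (phi_img_pi_minus K Hn Et Es Hpre Hsuf Hrest).
Qed.
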